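(* Let $\mathcal{A}$ be a ring with identity $1$ and let $a,d\in\mathcal{A}$. Suppose $a$ is Mary invertible along $d$, and let $t=(ad)^\sharp a$, where $(ad)^\sharp$ denotes the group inverse of $ad$. Then $dt$ and $1-td$ are idempotents and $a$ is Djordjevic–Wei $(p,q)$-invertible with $p=dt$ and $q=1-td$; i.e. there exists $b\in\mathcal{A}$ with $bab=b$, $ba=dt$ and $1-ab=1-td$.
   Context: For $x,y$ in $\mathcal{A}$, $x\mathcal{A}=y\mathcal{A}$ means $x=yz$ and $y=xz'$ for some $z,z'\in\mathcal{A}$; $\mathcal{A}x=\mathcal{A}y$ is defined analogously with left multiplication. $a$ is Mary invertible along $d$ if there exists $b\in\mathcal{A}$ with $bab=b$, $b\mathcal{A}=d\mathcal{A}$, $\mathcal{A}b=\mathcal{A}d$. The group inverse of $c\in\mathcal{A}$ is the (unique) $c^\sharp$ with $cc^\sharp c=c$, $c^\sharp cc^\sharp=c^\sharp$, $cc^\sharp=c^\sharp c$; it is known (Mary) that if $a$ is Mary invertible along $d$ then $ad$ is group invertible, so $t$ is well defined. Given idempotents $p,q\in\mathcal{A}$, $a$ is Djordjevic–Wei $(p,q)$-invertible if there exists $b\in\mathcal{A}$ with $bab=b$, $ba=p$, $1-ab=q$. *)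

From mathcomp Require Import all_boot all_algebra.
Set Implicit Arguments. Unset Strict Implicit. Unset Printing Implicit Defensive.
Import GRing.Theory.
Local Open Scope ring_scope.

(* x A = y A : x = y z and y = x z' for some z, z'. *)
Definition right_ideal_eq (R : pzRingType) (x y : R) : Prop :=
  (exists z, x = y * z) /\ (exists z', y = x * z').

(* A x = A y : x = z y and y = z' x for some z, z'. *)
Definition left_ideal_eq (R : pzRingType) (x y : R) : Prop :=
  (exists z, x = z * y) /\ (exists z', y = z' * x).

Definition mary_invertible (R : pzRingType) (a d : R) : Prop :=
  exists b : R, b * a * b = b /\ right_ideal_eq b d /\ left_ideal_eq b d.

Definition is_group_inverse (R : pzRingType) (c g : R) : Prop :=
  c * g * c = c /\ g * c * g = g /\ c * g = g * c.

Definition idempotent_el (R : pzRingType) (e : R) : Prop := e * e = e.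

Definition dw_invertible (R : pzRingType) (a p q : R) : Prop :=
  exists b : R, b * a * b = b /\ b * a = p /\ 1 - a * b = q.

(* With t = (ad)^# a, the outer-inverse identity (ad)^# (ad) (ad)^# = (ad)^#
   gives t d t = t, so d t and t d are idempotents, and b = d (ad)^# works as
   the (dt, 1 - td)-inverse: b a = d t, and commutation of (ad)^# with ad
   turns a b = (ad)(ad)^# into t d.  Mary invertibility of a along d is only
   needed to guarantee that (ad)^# exists, which the statement already
   supplies. *)
From mathcomp Require Import all_boot all_algebra.
Set Implicit Arguments. Unset Strict Implicit.
Local Open Scope ring_scope.
Import GRing.Theory.

Section GroupInverseAlong.

Variable R : pzRingType.

Lemma idempotent_el_subr (e : R) : idempotent_el e -> idempotent_el (1 - e).
Proof.
by rewrite /idempotent_el => ee; rewrite mulrBl !mulrBr !mul1r mulr1 ee subrr subr0.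
Qed.

Lemma idempotent_el_mul_outer (x y : R) :
  x * y * x = x -> idempotent_el (y * x) /\ idempotent_el (x * y).
Proof.
move=> xyx; rewrite /idempotent_el; split.
- by rewrite -mulrA (mulrA x) xyx.
- by rewrite mulrA xyx.
Qed.

Variables (a d g : R).
Hypothesis gi : is_group_inverse (a * d) g.

Lemma group_inverse_outer_along : g * a * d * (g * a) = g * a.
Proof. by case: gi => _ [gadg _]; rewrite !mulrA -(mulrA g a d) gadg. Qed.

Lemma dw_invertible_group_inverse : dw_invertible a (d * (g * a)) (1 - g * a * d).
Proof.
case: gi => _ [gadg adg_comm]; exists (d * g); split; last split.
- by rewrite -!mulrA (mulrA a) (mulrA g) gadg.
- by rewrite mulrA.
- by rewrite mulrA adg_comm mulrA.
Qed.

End GroupInverseAlong.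

Theorem corollary2p4 (R : pzRingType) (a d : R) :
  mary_invertible a d ->
  forall g : R, is_group_inverse (a * d) g ->
  let t := g * a in
  idempotent_el (d * t) /\ idempotent_el (1 - t * d) /\
  dw_invertible a (d * t) (1 - t * d).
Proof.
move=> _ g gi t.
have [dt_idem td_idem] := idempotent_el_mul_outer (group_inverse_outer_along gi).
split; first exact: dt_idem.
split; first exact: idempotent_el_subr.
exact: dw_invertible_group_inverse.
Qed.
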